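(* For every positive integer $n$, \[ Z^{+}(n)=\frac{1+(-1)^{n-1}}{2n}+\frac{(n-1)!}{2^{n}}\sum_{r=1}^{n}\frac{2^{r}}{r}, \] where $Z^{+}(n)=\sum_{k=0}^{n-1}\frac{(-1)^{k}+k!(n-k-1)!}{n}$. *)

From mathcomp Require Import all_boot all_order all_algebra.
Set Implicit Arguments. Unset Strict Implicit. Unset Printing Implicit Defensive.
Import Order.TTheory GRing.Theory Num.Theory.
Local Open Scope ring_scope.

Definition Zplus (n : nat) : rat :=
  \sum_(0 <= k < n) (((-1) ^+ k + (k`! * (n - k - 1)`!)%:R) / n%:R).

From mathcomp Require Import all_boot all_order all_algebra.
From mathcomp Require Import ring zify.
Import Order.TTheory GRing.Theory Num.Theory.
Local Open Scope ring_scope.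

(* With S(m) = sum_(k <= m) k! (m-k)!, so that n Z^+(n) = sum_(k < n) (-1)^k + S(n-1),
   the identity (k+l+2) k! l! = (k+1)! l! + k! (l+1)! summed over k + l = m gives
   2 S(m+1) = (m+2) S(m) + 2 (m+1)!.  Hence 2^(m+1) S(m) / (m+1)! grows by exactly
   2^(m+2)/(m+2) at each step, i.e. it is the partial sum of 2^r / r. *)

Definition fact_conv (m : nat) : nat := (\sum_(0 <= k < m.+1) k`! * (m - k)`!)%N.

Lemma factSS_mul (k l : nat) :
  ((k + l).+2 * (k`! * l`!) = k.+1`! * l`! + k`! * l.+1`!)%N.
Proof. by rewrite !factS; ring. Qed.

Lemma fact_convS (m : nat) :
  (2 * fact_conv m.+1 = m.+2 * fact_conv m + 2 * m.+1`!)%N.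
Proof.
have split_terms : (m.+2 * fact_conv m =
    \sum_(0 <= k < m.+1) k.+1`! * (m - k)`! +
    \sum_(0 <= k < m.+1) k`! * (m.+1 - k)`!)%N.
  rewrite big_distrr -big_split; apply: eq_big_nat => k /andP[_ /ltnSE le_km].
  by rewrite -{1}(subnKC le_km) (subSn le_km); apply: factSS_mul.
have drop_first :
    (fact_conv m.+1 = m.+1`! + \sum_(0 <= k < m.+1) k.+1`! * (m - k)`!)%N.
  by rewrite /fact_conv big_nat_recl //= fact0 subn0 mul1n.
have drop_last :
    (fact_conv m.+1 = \sum_(0 <= k < m.+1) k`! * (m.+1 - k)`! + m.+1`!)%N.
  by rewrite /fact_conv big_nat_recr //= subnn muln1.
lia.
Qed.

Lemma fact_convE (R : numFieldType) (m : nat) :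
  (fact_conv m)%:R =
    (m.+1)`!%:R / 2 ^+ m.+1 * \sum_(1 <= r < m.+2) (2 ^+ r / r%:R) :> R.
Proof.
have two_neq0 : 2 != 0 :> R by rewrite pnatr_eq0.
elim: m => [|m IH].
  by rewrite /fact_conv !big_nat1 divr1 divfK // expr1.
have -> : (fact_conv m.+1)%:R =
    ((m.+2)%:R * (fact_conv m)%:R + 2 * (m.+1)`!%:R) / 2 :> R.
  by apply: (canRL (mulfK two_neq0)); rewrite mulrC -!natrM -natrD fact_convS.
rewrite big_nat_recr //= IH [(m.+2)`!]factS natrM [2 ^+ m.+2]exprS.
by field; rewrite -natrD pnatr_eq0 expf_neq0.
Qed.

Lemma double_sum_signs (R : pzRingType) (n : nat) : (0 < n)%N ->
  2 * \sum_(0 <= k < n) (-1) ^+ k = 1 + (-1) ^+ (n - 1) :> R.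
Proof.
case: n => // n _; elim: n => [|n IH]; first by rewrite big_nat1 mulr1.
rewrite big_nat_recr //= mulrDr IH !subn1 /= exprS mulN1r mulrN mulr_natl mulr2n.
by rewrite opprD addrA addrK.
Qed.

Theorem mainTheorem5 (n : nat) (hn : (0 < n)%N) :
  Zplus n =
    (1 + (-1) ^+ (n - 1)) / (2 * n%:R)
    + ((n - 1)`!)%:R / 2 ^+ n * \sum_(1 <= r < n.+1) (2 ^+ r / r%:R).
Proof.
rewrite /Zplus -big_distrl big_split /= -(double_sum_signs _ _ hn) -natr_sum.
case: n hn => // m _.
have -> : (\sum_(0 <= k < m.+1) k`! * (m.+1 - k - 1)`!)%N = fact_conv m.
  by apply: eq_big_nat => k _; rewrite subn1 subSKn.
rewrite fact_convE subn1 /= factS natrM.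
by field; rewrite expf_neq0 // nat1r pnatr_eq0.
Qed.
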